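(* Let $n\ge2$, let $m\ge 3$ be odd, let $\mathcal{A}$ be an $m$th order $n$-dimensional strong Hankel tensor, and let $x=(x_1,\dots,x_n)^\top$ be a Z-eigenvector of $\mathcal{A}$ associated with a Z-eigenvalue $\lambda$. If $\lambda>0$, then $x_i\ge 0$ for all odd $i$; if $\lambda<0$, then $x_i\le0$ for all odd $i$.
   Context: $\mathcal{A}=(a_{i_1\cdots i_m})$ is a Hankel tensor if $a_{i_1\cdots i_m}=v_{i_1+\cdots+i_m-m}$ for some real $v=(v_0,\dots,v_{(n-1)m})^\top$. Let $N=\lceil((n-1)m+2)/2\rceil$; an associated Hankel matrix of $\mathcal{A}$ is the $N\times N$ matrix with $(i,j)$ entry $v_{i+j-2}$, where, if $(n-1)m$ is odd, $v_{2\lceil(n-1)m/2\rceil}$ is an additional (arbitrary) real number. $\mathcal{A}$ is a strong Hankel tensor if an associated Hankel matrix is positive semi-definite. $\mathcal{A}x^{m-1}$ is the vector with $i$th component $\sum_{i_2,\dots,i_m=1}^n a_{ii_2\cdots i_m}x_{i_2}\cdots x_{i_m}$. A real $\lambda$ is a Z-eigenvalue with Z-eigenvector $x\in\mathbb{R}^n$ if $x^\top x=1$ and $\mathcal{A}x^{m-1}=\lambda x$. *)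

From mathcomp Require Import all_boot all_order all_algebra.
Set Implicit Arguments. Unset Strict Implicit. Unset Printing Implicit Defensive.
Import Order.TTheory GRing.Theory Num.Theory.
Local Open Scope ring_scope.

Definition tensor (R : Type) (m n : nat) := {ffun 'I_m -> 'I_n} -> R.

(* Hankel tensor generated by v: a_{i_1...i_m} = v_{i_1+...+i_m-m} (1-based),
   i.e. v applied to the sum of the 0-based indices. *)
Definition hankel_gen (R : Type) (m n : nat) (A : tensor R m n) (v : nat -> R) :=
  forall f : {ffun 'I_m -> 'I_n}, A f = v (\sum_(k < m) (nat_of_ord (f k)))%N.

Definition is_hankel (R : Type) (m n : nat) (A : tensor R m n) :=
  exists v : nat -> R, hankel_gen A v.

(* Size of the associated Hankel matrix: N = ceil(((n-1)m+2)/2). *)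
Definition hankel_N (m n : nat) : nat := (((n - 1) * m + 3) %/ 2)%N.

Definition assoc_hankel_mx (R : Type) (m n : nat) (v : nat -> R) :
  'M[R]_(hankel_N m n) := \matrix_(i, j) v (i + j)%N.

Definition psd_mx (R : numDomainType) (N : nat) (M : 'M[R]_N) :=
  forall y : 'cV[R]_N, 0 <= (y^T *m M *m y) 0 0.

(* Values of v beyond index (n-1)m do not
   affect A; the one possibly used at index 2N-2 = (n-1)m+1 (when (n-1)m is
   odd) is exactly the "additional arbitrary real number". *)
Definition strong_hankel (R : numDomainType) (m n : nat) (A : tensor R m n) :=
  exists v : nat -> R, hankel_gen A v /\ psd_mx (assoc_hankel_mx m n v).

(* (A x^{m-1})_i = sum_{i_2..i_m} a_{i i_2 ... i_m} x_{i_2} ... x_{i_m}. *)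
Definition tensor_apply (R : numDomainType) (m n : nat) (A : tensor R m n)
  (x : 'I_n -> R) (i : 'I_n) : R :=
  \sum_(f : {ffun 'I_m -> 'I_n} | [forall k : 'I_m, (nat_of_ord k == 0%N) ==> (f k == i)])
     A f * \prod_(k < m | nat_of_ord k != 0%N) x (f k).

Definition Z_eigenpair (R : numDomainType) (m n : nat) (A : tensor R m n)
  (lambda : R) (x : 'I_n -> R) :=
  \sum_(i < n) x i ^+ 2 = 1 /\ forall i : 'I_n, tensor_apply A x i = lambda * x i.

From mathcomp Require Import all_boot all_order all_algebra.
From mathcomp Require Import zify ring.
Import Order.TTheory GRing.Theory Num.Theory.
Set Implicit Arguments. Unset Strict Implicit.
Local Open Scope ring_scope.

(* Let L be the linear functional on polynomials with L(X^k) = v_k.  The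
   Hankel matrix is the moment matrix of L, so it is PSD exactly when
   L(Q^2) >= 0 for all Q of degree < N.  Writing P = sum_j x_j X^j, the
   i-th component of A x^(m-1) is L(X^i P^(m-1)); for even i and odd m this
   is L(Q^2) with Q = X^(i/2) P^((m-1)/2), hence nonnegative.  The eigen-
   equation then makes lambda x_i nonnegative. *)

Section MomentFunctional.
Variables (R : comNzRingType) (v : nat -> R) (B : nat).

(* Truncated at B to be a finite sum; it agrees with L on polynomials of
   size at most B. *)
Definition moment_fun (p : {poly R}) : R := \sum_(k < B) p`_k * v k.

Lemma moment_fun_sum (I : finType) (F : I -> {poly R}) :
  moment_fun (\sum_i F i) = \sum_i moment_fun (F i).
Proof.
rewrite /moment_fun exchange_big /=; apply: eq_bigr => k _.
by rewrite coef_sum mulr_suml.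
Qed.

Lemma moment_fun_scaleXn c e : (e < B)%N -> moment_fun (c *: 'X^e) = c * v e.
Proof.
move=> lteB; rewrite /moment_fun (bigD1 (Ordinal lteB)) //= coefZ coefXn eqxx.
rewrite mulr1 big1 ?addr0 // => k neq_k; rewrite coefZ coefXn.
suff /negbTE -> : nat_of_ord k != e by rewrite mulr0 mul0r.
by apply: contra neq_k => /eqP ke; apply/eqP/val_inj.
Qed.

End MomentFunctional.

Lemma psd_moment_fun_sqr_ge0 (R : numDomainType) (m n B : nat) (v : nat -> R)
    (Q : {poly R}) :
  psd_mx (assoc_hankel_mx m n v) -> (size Q <= hankel_N m n)%N ->
  (hankel_N m n + hankel_N m n <= B.+1)%N -> 0 <= moment_fun v B (Q * Q).
Proof.
set N := hankel_N m n => psdH sizeQ leNB.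
have QE : Q = \sum_(a < N) Q`_a *: 'X^a.
  rewrite -poly_def; apply/polyP => k; rewrite coef_poly.
  by case: ifP => // /negbT; rewrite -leqNgt => leNk; rewrite (leq_sizeP _ _ sizeQ).
have -> : Q * Q = \sum_(a < N) \sum_(b < N) (Q`_a * Q`_b) *: 'X^(a + b).
  rewrite [X in X * _ = _]QE [X in _ * X = _]QE mulr_suml; apply: eq_bigr => a _.
  rewrite mulr_sumr; apply: eq_bigr => b _.
  by rewrite -scalerAl -scalerAr scalerA exprD.
have := psdH (\col_a Q`_a).
have -> : ((\col_a Q`_a)^T *m assoc_hankel_mx m n v *m \col_a Q`_a) 0 0 =
          \sum_(a < N) \sum_(b < N) (Q`_a * Q`_b) * v (a + b)%N.
  rewrite mxE exchange_big /=; apply: eq_bigr => b _.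
  rewrite !mxE mulr_suml; apply: eq_bigr => a _.
  by rewrite !mxE /= mulrAC.
rewrite moment_fun_sum; congr (_ <= _); apply: eq_bigr => a _.
rewrite moment_fun_sum; apply: eq_bigr => b _; rewrite moment_fun_scaleXn //.
by have := ltn_ord a; have := ltn_ord b; lia.
Qed.

Lemma prod_scaleXn (R : comNzRingType) (M : nat) (c : 'I_M -> R) (e : 'I_M -> nat) :
  \prod_(k < M) (c k *: 'X^(e k)) = (\prod_k c k) *: ('X^(\sum_k e k) : {poly R}).
Proof.
rewrite (eq_bigr (fun k => (c k)%:P * 'X^(e k))); last by move=> k _; rewrite mul_polyC.
by rewrite big_split /= prodrXr -rmorph_prod mul_polyC.
Qed.

Lemma sum_ord_ltn_mul (M n : nat) (f : 'I_M -> 'I_n) :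
  (0 < M)%N -> (\sum_(k < M) f k < M * n)%N.
Proof.
move=> M_gt0; have : (\sum_(k < M) (f k).+1 <= \sum_(k < M) n)%N.
  by apply: leq_sum => k _; apply: ltn_ord.
rewrite sum_nat_const card_ord (eq_bigr (fun k => f k + 1)%N) => [|k _]; last first.
  by rewrite addn1.
by rewrite big_split /= sum1_card card_ord; lia.
Qed.

Definition coord_poly (R : nzRingType) (n : nat) (x : 'I_n -> R) : {poly R} :=
  \sum_(j < n) x j *: 'X^j.

Lemma size_coord_poly (R : nzRingType) (n : nat) (x : 'I_n -> R) :
  (size (coord_poly x) <= n)%N.
Proof.
apply/leq_sizeP => j le_nj; rewrite coef_sum big1 // => k _.
rewrite coefZ coefXn; suff /negbTE -> : j != k by rewrite mulr0.
by have := ltn_ord k; lia.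
Qed.

Lemma tensor_apply_moment_fun (R : numDomainType) (m n B : nat)
    (A : tensor R m.+1 n) (v : nat -> R) (x : 'I_n -> R) (i : 'I_n) :
  hankel_gen A v -> (m.+1 * n <= B)%N ->
  tensor_apply A x i = moment_fun v B ('X^i * coord_poly x ^+ m).
Proof.
move=> hankA leB.
pose w (k : 'I_m.+1) (j : 'I_n) : R := if k == ord0 then (j == i)%:R else x j.
have wE : \prod_(k < m.+1) (\sum_(j < n) w k j *: 'X^j) = 'X^i * coord_poly x ^+ m.
  rewrite big_ord_recl; congr (_ * _).
    rewrite (bigD1 i) //= /w !eqxx scale1r big1 ?addr0 // => j /negbTE ->.
    by rewrite scale0r.
  rewrite -[in RHS](card_ord m) -prodr_const; apply: eq_bigr => k _.
  by apply: eq_bigr => j _; rewrite /w eq_sym (negbTE (neq_lift _ _)).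
rewrite -wE bigA_distr_bigA /= moment_fun_sum /tensor_apply big_mkcond /=.
apply: eq_bigr => f _; rewrite prod_scaleXn moment_fun_scaleXn; last first.
  exact: leq_trans (sum_ord_ltn_mul _ _) leB.
have -> : [forall k : 'I_m.+1, (nat_of_ord k == 0%N) ==> (f k == i)] = (f ord0 == i).
  apply/forallP/idP => [/(_ ord0) // | /eqP f0 k]; apply/implyP => /eqP k0.
  have -> : k = ord0 by apply/val_inj.
  by rewrite f0.
rewrite hankA [X in _ = X * _](bigD1 ord0) //= /w eqxx.
have -> : \prod_(k < m.+1 | k != ord0) (if k == ord0 then (f k == i)%:R else x (f k)) =
          \prod_(k < m.+1 | nat_of_ord k != 0%N) x (f k).
  by apply: eq_bigr => k /negbTE ->.
by case: (f ord0 == i); rewrite ?mul1r ?mul0r // mulrC.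
Qed.

Lemma tensor_apply_even_ge0 (R : numDomainType) (q n : nat)
    (A : tensor R q.*2.+1 n) (v : nat -> R) (x : 'I_n -> R) (i : 'I_n) :
  hankel_gen A v -> psd_mx (assoc_hankel_mx q.*2.+1 n v) -> ~~ odd i ->
  0 <= tensor_apply A x i.
Proof.
move=> hankA psdH even_i.
set N := hankel_N q.*2.+1 n.
rewrite (tensor_apply_moment_fun x i hankA (leq_addr (N + N) _)).
set p := (i./2)%N.
have ip : nat_of_ord i = (p + p)%N.
  by have := odd_double_half i; rewrite (negbTE even_i) add0n -addnn.
have -> : 'X^i * coord_poly x ^+ q.*2 =
          ('X^p * coord_poly x ^+ q) * ('X^p * coord_poly x ^+ q).
  by rewrite ip -addnn !exprD; ring.
apply: psd_moment_fun_sqr_ge0 => //; last by lia.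
apply: leq_trans (size_polyMleq _ _) _; rewrite size_polyXn.
have := size_poly_exp_leq (coord_poly x) q.
have : ((size (coord_poly x)).-1 * q <= (n - 1) * q)%N.
  by apply: leq_mul => //; have := size_coord_poly x; lia.
have := ltn_ord i; rewrite /N /hankel_N leq_divRL //.
have -> : ((n - 1) * q.*2.+1 = (n - 1) * q + (n - 1) * q + (n - 1))%N.
  by rewrite -addnn mulnSr mulnDr.
set s := size (coord_poly x ^+ q); set t := (_.-1 * q)%N; set u := ((n - 1) * q)%N.
lia.
Qed.

Unset Implicit Arguments.

Theorem proposition6 (R : realFieldType) (m n : nat) (A : tensor R m n)
  (lambda : R) (x : 'I_n -> R) :
  (2 <= n)%N -> (3 <= m)%N -> odd m ->
  strong_hankel A -> Z_eigenpair A lambda x ->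
  (0 < lambda -> forall i : 'I_n, ~~ odd (nat_of_ord i) -> 0 <= x i) /\
  (lambda < 0 -> forall i : 'I_n, ~~ odd (nat_of_ord i) -> x i <= 0).
Proof.
move=> _ _ odd_m [v [hankA psdH]] [_ eigx].
have mE : m = (m./2).*2.+1 by have := odd_double_half m; rewrite odd_m; lia.
move: A hankA psdH eigx; rewrite mE => A hankA psdH eigx.
have lambda_x_ge0 (i : 'I_n) : ~~ odd i -> 0 <= lambda * x i.
  by move=> even_i; rewrite -eigx; exact: tensor_apply_even_ge0 hankA psdH even_i.
split=> [lambda_gt0 | lambda_lt0] i even_i; have := lambda_x_ge0 i even_i.
  by rewrite pmulr_rge0.
by rewrite nmulr_rge0.
Qed.
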